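(* For every $\alpha\in(0,\pi/2]$, the system of two equations in the real unknowns $(d,u_1)$ $$18(4\cos\alpha-3)u_1^2+3d(d^2-10)\Big(\cos\tfrac{\alpha}{2}-2\cos\tfrac{3\alpha}{2}\Big)u_1+\cos^2\tfrac{\alpha}{2}\Big(-3d^6+18d^4-34d^2-420+4d^2(d^4-6d^2+30)\cos\alpha\Big)=0,$$ $$36\Big(3\sin\tfrac{3\alpha}{2}-11\sin\tfrac{\alpha}{2}\Big)u_1^2+6\sin\tfrac{\alpha}{2}\Big(5\cos\tfrac{\alpha}{2}-3\cos\tfrac{3\alpha}{2}\Big)d(d^2-10)u_1+\Big(840\alpha-8d^2(d^4-6d^2+30)\sin\alpha+d^2(3d^4-18d^2+34)\sin(2\alpha)\Big)\cos\tfrac{\alpha}{2}=0$$ has no real solutions.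
   Context: This system arises in interpolating the $G^2$ data and arc length of a circular arc of inner angle $2\alpha$ by a planar Pythagorean-hodograph curve of degree $7$, in the case $u_2=-u_1+\frac16 d(d^2-10)\cos(\alpha/2)$ of the non-symmetric preimage coefficients; only the explicit equations above are needed. *)

From Stdlib Require Import Reals.
Open Scope R_scope.

From Stdlib Require Import Reals Lra Psatz.
Open Scope R_scope.

(* Write c = cos (alpha/2), s = sin (alpha/2), S = sin alpha, C = cos alpha, p = d^2 and
   N = S (4 - 3C) - (4C - 3) alpha.  For the two equations E1 = 0, E2 = 0, the combination
   4 s (7 - 6 c^2) E1 + (8 c^2 - 7) E2 is free of u1 and fixes p:  8 S^3 p = 15 N.  The
   second equation is a concave quadratic in u1, so it has a root only if its maximum is
   nonnegative, which bounds p from above.  Taylor estimates of sin and cos give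
   (20 + C) N > 64 alpha S^2 on (0, pi/2], hence p > 4, and then the two conditions on p
   contradict each other. *)

Lemma cos_half_double a : cos a = 2 * cos (a / 2) ^ 2 - 1.
Proof. replace (cos a) with (cos (2 * (a / 2))) by (f_equal; field). rewrite cos_2a_cos; ring. Qed.

Lemma sin_half_double a : sin a = 2 * sin (a / 2) * cos (a / 2).
Proof. replace (sin a) with (sin (2 * (a / 2))) by (f_equal; field). apply sin_2a. Qed.

Lemma cos_three_halves a : cos (3 * a / 2) = 4 * cos (a / 2) ^ 3 - 3 * cos (a / 2).
Proof.
  replace (3 * a / 2) with (a + a / 2) by field.
  rewrite cos_plus, (cos_half_double a), (sin_half_double a).
  assert (E : sin (a / 2) ^ 2 = 1 - cos (a / 2) ^ 2)
    by (rewrite <- (sin2_cos2 (a / 2)); unfold Rsqr; ring).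
  ring_simplify. rewrite E. ring.
Qed.

Lemma sin_three_halves a : sin (3 * a / 2) = sin (a / 2) * (4 * cos (a / 2) ^ 2 - 1).
Proof.
  replace (3 * a / 2) with (a + a / 2) by field.
  rewrite sin_plus, (cos_half_double a), (sin_half_double a). ring.
Qed.

Lemma sin_ge_taylor3 a : 0 <= a <= PI -> a - a ^ 3 / 6 <= sin a.
Proof.
  intros Ha. destruct (sin_bound a 0 (proj1 Ha) (proj2 Ha)) as [H _].
  unfold sin_approx, sin_term in H; simpl in H. lra.
Qed.

Lemma sin_le_self a : 0 <= a <= PI -> sin a <= a.
Proof.
  intros Ha. destruct (sin_bound a 0 (proj1 Ha) (proj2 Ha)) as [_ H].
  unfold sin_approx, sin_term in H; simpl in H.
  assert (a ^ 5 / 120 <= a ^ 3 / 6).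
  { pose proof PI_4. pose proof (pow_le a 3 (proj1 Ha)).
    assert (a ^ 2 <= 16) by nra.
    replace (a ^ 5) with (a ^ 3 * a ^ 2) by ring. nra. }
  lra.
Qed.

Lemma cos_le_taylor4 a : - PI / 2 <= a <= PI / 2 -> cos a <= 1 - a ^ 2 / 2 + a ^ 4 / 24.
Proof.
  intros Ha. destruct (cos_bound a 0 (proj1 Ha) (proj2 Ha)) as [_ H].
  unfold cos_approx, cos_term in H; simpl in H. lra.
Qed.

Definition system_eq1 (a d u : R) : R :=
  18 * (4 * cos a - 3) * u ^ 2
  + 3 * d * (d ^ 2 - 10) * (cos (a / 2) - 2 * cos (3 * a / 2)) * u
  + (cos (a / 2)) ^ 2 *
      (- 3 * d ^ 6 + 18 * d ^ 4 - 34 * d ^ 2 - 420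
       + 4 * d ^ 2 * (d ^ 4 - 6 * d ^ 2 + 30) * cos a).

Definition system_eq2 (a d u : R) : R :=
  36 * (3 * sin (3 * a / 2) - 11 * sin (a / 2)) * u ^ 2
  + 6 * sin (a / 2) * (5 * cos (a / 2) - 3 * cos (3 * a / 2)) * d * (d ^ 2 - 10) * u
  + (840 * a - 8 * d ^ 2 * (d ^ 4 - 6 * d ^ 2 + 30) * sin a
     + d ^ 2 * (3 * d ^ 4 - 18 * d ^ 2 + 34) * sin (2 * a))
    * cos (a / 2).

Definition eliminant_rhs (a S C : R) : R := S * (4 - 3 * C) - (4 * C - 3) * a.

Definition u1_eliminant (a S C p : R) : R :=
  448 * S * (1 - C ^ 2) * p - 840 * eliminant_rhs a S C.

(* With S = sin a and C = cos a, [cos (a/2) / 2] times this is the maximum over u1 of the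
   concave quadratic [system_eq2 a d u1], where p = d^2. *)
Definition eq2_discriminant (a S C p : R) : R :=
  1680 * a - 7 / 2 * S * ((4 - 3 * C) * p ^ 2 * (p - 4) + (80 + 4 * C) * p).

Ltac half_angle_forms a :=
  rewrite sin_2a, (sin_half_double a), (cos_half_double a), cos_three_halves, sin_three_halves.

Lemma u1_eliminant_combination a d u :
  cos (a / 2) * u1_eliminant a (sin a) (cos a) (d ^ 2)
  = 4 * sin (a / 2) * (7 - 6 * cos (a / 2) ^ 2) * system_eq1 a d u
    + (8 * cos (a / 2) ^ 2 - 7) * system_eq2 a d u.
Proof. unfold u1_eliminant, eliminant_rhs, system_eq1, system_eq2. half_angle_forms a. ring. Qed.

Lemma eq2_discriminant_completion a d u :
  cos (a / 2) * eq2_discriminant a (sin a) (cos a) (d ^ 2)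
  = 2 * system_eq2 a d u
    + sin (a / 2) * (7 - 6 * cos (a / 2) ^ 2) * (12 * u - cos (a / 2) * d * (d ^ 2 - 10)) ^ 2.
Proof. unfold eq2_discriminant, system_eq2. half_angle_forms a. field. Qed.

Lemma system_u1_eliminant a d u :
  0 < cos (a / 2) -> system_eq1 a d u = 0 -> system_eq2 a d u = 0 ->
  u1_eliminant a (sin a) (cos a) (d ^ 2) = 0.
Proof.
  intros Hc E1 E2.
  pose proof (u1_eliminant_combination a d u) as E.
  rewrite E1, E2 in E.
  apply (Rmult_eq_reg_l (cos (a / 2))); lra.
Qed.

Lemma system_eq2_discriminant a d u :
  0 < cos (a / 2) -> 0 <= sin (a / 2) -> system_eq2 a d u = 0 ->
  0 <= eq2_discriminant a (sin a) (cos a) (d ^ 2).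
Proof.
  intros Hc Hs E2.
  pose proof (eq2_discriminant_completion a d u) as E.
  rewrite E2 in E.
  assert (0 <= 7 - 6 * cos (a / 2) ^ 2) by (pose proof (COS_bound (a / 2)); nra).
  assert (0 <= sin (a / 2) * (7 - 6 * cos (a / 2) ^ 2)
               * (12 * u - cos (a / 2) * d * (d ^ 2 - 10)) ^ 2).
  { apply Rmult_le_pos; [apply Rmult_le_pos; lra | apply pow2_ge_0]. }
  apply (Rmult_le_reg_l (cos (a / 2))); lra.
Qed.

Lemma quartic_pos x : 0 < x <= 254 / 100 ->
  0 < 6 + 199 / 24 * x - 131 / 72 * x ^ 2 + 5 / 64 * x ^ 3 + x ^ 4 / 1152.
Proof.
  intros Hx.
  assert (0 <= x * (199 / 24 - 131 / 72 * x)) by (apply Rmult_le_pos; lra).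
  assert (0 <= x ^ 3) by (apply pow_le; lra).
  assert (0 <= x ^ 4) by (apply pow_le; lra).
  nra.
Qed.

(* Once S^2 is replaced by 1 - C^2, (20 + C) N - 64 a S^2 is decreasing in C on [0, Ch]
   and increasing in S, so C may be replaced by its Taylor majorant Ch and S by its Taylor
   minorant, leaving a * x times a quartic in x = a^2. *)
Lemma eliminant_rhs_lower_bound a S C :
  0 < a <= 2 -> a - a ^ 3 / 6 <= S <= a -> 0 <= C <= 1 - a ^ 2 / 2 + a ^ 4 / 24 ->
  S ^ 2 + C ^ 2 = 1 ->
  64 * a * S ^ 2 < (20 + C) * eliminant_rhs a S C.
Proof.
  unfold eliminant_rhs. intros Ha HS HC HSC.
  set (x := a ^ 2).
  set (Ch := 1 - x / 2 + x ^ 2 / 24).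
  assert (HCh : C <= Ch) by (unfold Ch, x; lra).
  assert (Hx : 0 < x <= 254 / 100).
  { assert (0 < x <= 4) by (unfold x; nra).
    assert (0 <= 1 - x / 2 + x ^ 2 / 24) by (fold Ch; lra).
    nra. }
  assert (Hgap : (20 + C) * (S * (4 - 3 * C) - (4 * C - 3) * a) - 64 * a * S ^ 2
               = (80 - 56 * C - 3 * C ^ 2) * S - a * (- 60 * C ^ 2 + 77 * C + 4)).
  { replace (S ^ 2) with (1 - C ^ 2) by lra. ring. }
  assert (Hmono : (80 - 56 * Ch - 3 * Ch ^ 2) * S - a * (- 60 * Ch ^ 2 + 77 * Ch + 4)
                 <= (80 - 56 * C - 3 * C ^ 2) * S - a * (- 60 * C ^ 2 + 77 * C + 4)).
  { assert (- 56 * S - 77 * a + (C + Ch) * (60 * a - 3 * S) <= 0).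
    { assert (a * (5 * x ^ 2 - 152 / 3 * x - 13) <= 0) by (unfold x in *; nra).
      assert (-56 * (a - a ^ 3 / 6) - 77 * a + 120 * Ch * a
              = a * (5 * x ^ 2 - 152 / 3 * x - 13)) by (unfold Ch, x; field).
      nra. }
    nra. }
  assert (Hcoef : 0 < 80 - 56 * Ch - 3 * Ch ^ 2) by (unfold Ch; nra).
  assert (Htaylor : (80 - 56 * Ch - 3 * Ch ^ 2) * (a - a ^ 3 / 6)
                    - a * (- 60 * Ch ^ 2 + 77 * Ch + 4)
       = a * x * (6 + 199 / 24 * x - 131 / 72 * x ^ 2 + 5 / 64 * x ^ 3 + x ^ 4 / 1152))
    by (unfold Ch, x; field).
  pose proof (quartic_pos x Hx).
  assert (0 < a * x) by (apply Rmult_lt_0_compat; lra).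
  nra.
Qed.

Lemma sin_cos_eliminant_rhs_lower_bound a : 0 < a <= PI / 2 ->
  64 * a * sin a ^ 2 < (20 + cos a) * eliminant_rhs a (sin a) (cos a).
Proof.
  intros Ha. pose proof PI_4. pose proof PI_RGT_0.
  apply eliminant_rhs_lower_bound.
  - lra.
  - split; [apply sin_ge_taylor3 | apply sin_le_self]; lra.
  - split; [apply cos_ge_0 | apply cos_le_taylor4]; lra.
  - pose proof (sin2_cos2 a) as E. unfold Rsqr in E. lra.
Qed.

Lemma eliminant_discriminant_incompatible a S C p :
  0 < S <= a -> C <= 1 -> 0 <= p -> S ^ 2 + C ^ 2 = 1 ->
  64 * a * S ^ 2 < (20 + C) * eliminant_rhs a S C ->
  u1_eliminant a S C p = 0 -> 0 <= eq2_discriminant a S C p -> False.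
Proof.
  unfold u1_eliminant, eq2_discriminant.
  set (N := eliminant_rhs a S C).
  intros HS HC Hp HSC HN Helim Hdisc.
  assert (HpN : 8 * S ^ 3 * p = 15 * N).
  { replace (1 - C ^ 2) with (S ^ 2) in Helim by lra. lra. }
  assert (HS2 : 0 < S ^ 2) by (apply pow_lt; lra).
  assert (HN21 : 64 * S ^ 3 < 21 * N).
  { assert (0 < 20 + C) by nra.
    assert (0 < a * S ^ 2) by (apply Rmult_lt_0_compat; lra).
    assert (0 < N)
      by (apply (Rmult_lt_reg_l (20 + C)); [lra | rewrite Rmult_0_r; lra]).
    assert (S * S ^ 2 <= a * S ^ 2) by nra.
    replace (S ^ 3) with (S * S ^ 2) by ring. nra. }
  assert (Hp4 : 4 < p).
  { assert (0 < S ^ 3) by (apply pow_lt; lra). nra. }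
  assert (0 <= (4 - 3 * C) * p ^ 2 * (p - 4)).
  { apply Rmult_le_pos; [apply Rmult_le_pos; [lra | apply pow2_ge_0] | lra]. }
  assert (S * (80 + 4 * C) * p <= 480 * a) by nra.
  nra.
Qed.

Theorem mainTheorem3 :
  forall alpha : R, 0 < alpha <= PI / 2 ->
  ~ (exists d u1 : R,
      18 * (4 * cos alpha - 3) * u1 ^ 2
      + 3 * d * (d ^ 2 - 10) * (cos (alpha / 2) - 2 * cos (3 * alpha / 2)) * u1
      + (cos (alpha / 2)) ^ 2 *
          (- 3 * d ^ 6 + 18 * d ^ 4 - 34 * d ^ 2 - 420
           + 4 * d ^ 2 * (d ^ 4 - 6 * d ^ 2 + 30) * cos alpha) = 0
    /\
      36 * (3 * sin (3 * alpha / 2) - 11 * sin (alpha / 2)) * u1 ^ 2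
      + 6 * sin (alpha / 2) * (5 * cos (alpha / 2) - 3 * cos (3 * alpha / 2))
          * d * (d ^ 2 - 10) * u1
      + (840 * alpha - 8 * d ^ 2 * (d ^ 4 - 6 * d ^ 2 + 30) * sin alpha
         + d ^ 2 * (3 * d ^ 4 - 18 * d ^ 2 + 34) * sin (2 * alpha))
        * cos (alpha / 2) = 0).
Proof.
  intros a Ha [d [u [E1 E2]]].
  pose proof PI_RGT_0.
  assert (Hc : 0 < cos (a / 2)) by (apply cos_gt_0; lra).
  assert (Hs : 0 <= sin (a / 2)) by (apply sin_ge_0; lra).
  apply (eliminant_discriminant_incompatible a (sin a) (cos a) (d ^ 2)).
  - split; [apply sin_gt_0 | apply sin_le_self]; lra.
  - apply COS_bound.
  - apply pow2_ge_0.
  - pose proof (sin2_cos2 a) as E. unfold Rsqr in E. lra.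
  - now apply sin_cos_eliminant_rhs_lower_bound.
  - now apply (system_u1_eliminant a d u).
  - now apply (system_eq2_discriminant a d u).
Qed.
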